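(* (1) For every $n\ge1$, $(\mathcal{Q}_n,\le)$ is a lattice. (2) For every $n\ge3$, $(\mathcal{P}_n,\le)$ is not a lattice. (3) For every $n\ge4$, $\mathcal{Q}_n\setminus\mathcal{P}_n$ with the induced order is not a lattice.
   Context: Fix $n\ge1$, $L_n=\{0,1,\dots,n\}$. A discrete quasi-copula is a map $Q:L_n\times L_n\to[0,n]$ such that (Q1) $Q(i,0)=Q(0,i)=0$ and $Q(i,n)=Q(n,i)=i$ for all $i\in L_n$; (Q2) $Q$ is non-decreasing in each argument; (Q3) $Q(i,j)+Q(i',j')\ge Q(i,j')+Q(i',j)$ for all $i\le i'$, $j\le j'$ in $L_n$ such that at least one of $i,i',j,j'$ is $0$ or $n$. A discrete copula is a map satisfying (Q1) and the 2-increasing inequality $Q(i,j)+Q(i',j')\ge Q(i,j')+Q(i',j)$ for all $i\le i'$, $j\le j'$ in $L_n$. Such a map is irreducible if its range is exactly $L_n$. $\mathcal{Q}_n$ (resp. $\mathcal{P}_n$) is the set of irreducible discrete quasi-copulas (resp. copulas) on $L_n$, ordered by the concordance order $P\le Q$ iff $P(i,j)\le Q(i,j)$ for all $i,j\in L_n$; $\mathcal{P}_n\subseteq\mathcal{Q}_n$ and subsets carry the induced order. *)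

From mathcomp Require Import all_boot.
Set Implicit Arguments. Unset Strict Implicit. Unset Printing Implicit Defensive.

(* A map L_n x L_n -> N, with L_n = {0,...,n} represented by 'I_n.+1.
   Irreducible discrete (quasi-)copulas take values in L_n, so natural-number
   values lose nothing. *)
Definition dmap (n : nat) := {ffun 'I_n.+1 * 'I_n.+1 -> nat}.

Definition dle (n : nat) (P Q : dmap n) : Prop :=
  forall i j : 'I_n.+1, P (i, j) <= Q (i, j).

Definition is_border (n : nat) (i : 'I_n.+1) : bool := (val i == 0) || (val i == n).

Definition boundary (n : nat) (Q : dmap n) : Prop :=
  (forall i j : 'I_n.+1, Q (i, j) <= n) /\
  (forall i : 'I_n.+1,
     [/\ Q (i, ord0) = 0, Q (ord0, i) = 0, Q (i, ord_max) = val i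
       & Q (ord_max, i) = val i]).

Definition discrete_quasi_copula (n : nat) (Q : dmap n) : Prop :=
  [/\ boundary Q,
      (forall i i' j : 'I_n.+1, i <= i' -> Q (i, j) <= Q (i', j)),
      (forall i j j' : 'I_n.+1, j <= j' -> Q (i, j) <= Q (i, j')) &
      (forall i i' j j' : 'I_n.+1, i <= i' -> j <= j' ->
         [|| is_border i, is_border i', is_border j | is_border j'] ->
         Q (i, j') + Q (i', j) <= Q (i, j) + Q (i', j'))].

Definition discrete_copula (n : nat) (Q : dmap n) : Prop :=
  boundary Q /\
  (forall i i' j j' : 'I_n.+1, i <= i' -> j <= j' ->
     Q (i, j') + Q (i', j) <= Q (i, j) + Q (i', j')).

Definition irreducible (n : nat) (Q : dmap n) : Prop :=
  (forall i j : 'I_n.+1, Q (i, j) <= n) /\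
  (forall k, k <= n -> exists i j : 'I_n.+1, Q (i, j) = k).

Definition Qset (n : nat) (Q : dmap n) : Prop := discrete_quasi_copula Q /\ irreducible Q.
Definition Pset (n : nat) (Q : dmap n) : Prop := discrete_copula Q /\ irreducible Q.

Definition is_lub (T : Type) (le : T -> T -> Prop) (S : T -> Prop) (x y z : T) :=
  [/\ S z, le x z, le y z & forall w, S w -> le x w -> le y w -> le z w].
Definition is_glb (T : Type) (le : T -> T -> Prop) (S : T -> Prop) (x y z : T) :=
  [/\ S z, le z x, le z y & forall w, S w -> le w x -> le w y -> le w z].
Definition is_lattice (T : Type) (le : T -> T -> Prop) (S : T -> Prop) : Prop :=
  forall x y, S x -> S y ->
    (exists z, is_lub le S x y z) /\ (exists z, is_glb le S x y z).

From mathcomp Require Import all_boot zify.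
Set Implicit Arguments. Unset Strict Implicit. Unset Printing Implicit Defensive.

(* Proof outline.
   (1) A map Q on L_n x L_n satisfying the boundary conditions (Q1) is a
   discrete quasi-copula iff it is non-decreasing and 1-Lipschitz in each
   argument: the instances of (Q3) with a border index are exactly these
   Lipschitz conditions.  Both properties are preserved by pointwise max and
   min, and the boundary forces the range to be all of L_n; hence pointwise
   max and min are the supremum and infimum in Q_n.
   (2), (3) Counterexamples are given by small tables t on {0,..,b-1}^2,
   embedded into L_n (b <= n) by the copula min(i,j) outside [0,b)^2.  Finite,
   executable checks on the table (unit steps in each direction, zero borders,
   2-increasing unit squares) guarantee that the embedded map is a
   quasi-copula, resp. a copula; unit steps and unit squares extend to
   arbitrary intervals and rectangles by telescoping.  In (2) two copulas have
   two common lower bounds whose pointwise max equals their pointwise min, so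
   an infimum would have to be that min, which is not 2-increasing.  In (3)
   dually, an infimum of two proper quasi-copulas would be forced to be a
   copula. *)

Lemma unit_steps_mono_lip (f : nat -> nat) :
  (forall i, f i <= f i.+1 <= (f i).+1) ->
  forall i i', i <= i' -> f i <= f i' /\ f i' + i <= f i + i'.
Proof.
move=> step i i' /subnKC <-; elim: (i' - i) => [|k [IHmono IHlip]].
  by rewrite addn0.
have /andP := step (i + k); rewrite addnS; lia.
Qed.

Lemma unit_squares_2increasing (F : nat -> nat -> nat) :
  (forall i j, F i j.+1 + F i.+1 j <= F i j + F i.+1 j.+1) ->
  forall i i' j j', i <= i' -> j <= j' ->
  F i j' + F i' j <= F i j + F i' j'.
Proof.
move=> square i i' j j' /subnKC <- /subnKC <-.
have column k j0 : F i j0.+1 + F (i + k) j0 <= F i j0 + F (i + k) j0.+1.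
  elim: k => [|k IH]; first by rewrite addn0; lia.
  by have := square (i + k) j0; rewrite addnS; lia.
elim: (j' - j) => [|l IH]; first by rewrite addn0; lia.
by have := column (i' - i) (j + l); rewrite addnS; lia.
Qed.

Section QuasiCopulas.
Variable n : nat.
Implicit Types (Q x y : dmap n) (i j : 'I_n.+1).

Definition mono_lip Q : Prop :=
  (forall i i' j, i <= i' -> Q (i, j) <= Q (i', j) /\ Q (i', j) + i <= Q (i, j) + i') /\
  (forall i j j', j <= j' -> Q (i, j) <= Q (i, j') /\ Q (i, j') + j <= Q (i, j) + j').

Lemma border_cases i : is_border i -> i = ord0 \/ i = ord_max.
Proof. by case/orP => /eqP e; [left | right]; apply/val_inj. Qed.

Lemma quasi_copula_mono_lip Q :
  boundary Q -> discrete_quasi_copula Q <-> mono_lip Q.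
Proof.
move=> [bounded border]; split.
- move=> [_ mono_i mono_j Q3]; split.
  + move=> i i' j le_ii'; split; first exact: mono_i.
    have := Q3 i i' j ord_max le_ii' (leq_ord _).
    have [_ _ -> _] := border i; have [_ _ -> _] := border i'.
    by rewrite /is_border /= eqxx !orbT => /(_ isT); lia.
  + move=> i j j' le_jj'; split; first exact: mono_j.
    have := Q3 i ord_max j j' (leq_ord _) le_jj'.
    have [_ _ _ ->] := border j; have [_ _ _ ->] := border j'.
    by rewrite /is_border /= eqxx !orbT => /(_ isT); lia.
- move=> [lip_i lip_j]; split=> //.
  + by move=> i i' j le; case: (lip_i i i' j le).
  + by move=> i j j' le; case: (lip_j i j j' le).
  move=> i i' j j' le_ii' le_jj' on_border.
  move: (border i) (border i') (border j) (border j')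
    (lip_i i i' j le_ii') (lip_i i i' j' le_ii')
    (lip_j i j j' le_jj') (lip_j i' j j' le_jj') (ltn_ord i') (ltn_ord j').
  move=> [? ? ? ?] [? ? ? ?] [? ? ? ?] [? ? ? ?] [? ?] [? ?] [? ?] [? ?] ? ?.
  by case/or4P: on_border => /border_cases [] ?; subst; simpl in *; lia.
Qed.

(* The boundary condition Q (k, n) = k makes every map with (Q1) irreducible. *)
Lemma boundary_irreducible Q : boundary Q -> irreducible Q.
Proof.
move=> [bounded border]; split=> // k le_kn; exists (inord k), ord_max.
by have [_ _ -> _] := border (inord k); exact: inordK.
Qed.

Lemma Qset_boundary_mono_lip Q : Qset Q -> boundary Q /\ mono_lip Q.
Proof. by move=> [[bQ ? ? ?] _]; split; last apply/quasi_copula_mono_lip. Qed.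

Lemma Qset_pointwise (op : nat -> nat -> nat) x y :
  (forall a, op a a = a) ->
  (forall a b c d, a <= c -> b <= d -> op a b <= op c d) ->
  (forall a b c d k, a <= c + k -> b <= d + k -> op a b <= op c d + k) ->
  (forall a b, op a b <= maxn a b) ->
  Qset x -> Qset y -> Qset [ffun p => op (x p) (y p)].
Proof.
move=> op_id op_mono op_shift op_max Sx Sy.
have [[bx1 bx2] [ix jx]] := Qset_boundary_mono_lip Sx.
have [[by1 by2] [iy jy]] := Qset_boundary_mono_lip Sy.
have bop : boundary [ffun p => op (x p) (y p)].
  split=> [i j | i]; rewrite !ffunE.
  - by apply: leq_trans (op_max _ _) _; rewrite geq_max bx1 by1.
  - by move: (bx2 i) (by2 i) => [-> -> -> ->] [-> -> -> ->]; rewrite !op_id.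
have lip a c u v : a + u <= c + v -> u <= v -> a <= c + (v - u) by lia.
split; last exact: boundary_irreducible.
apply/quasi_copula_mono_lip => //; split.
- move=> i i' j le; rewrite !ffunE.
  have [a1 a2] := ix i i' j le; have [b1 b2] := iy i i' j le.
  split; first exact: op_mono.
  by have := op_shift _ _ _ _ _ (lip _ _ _ _ a2 le) (lip _ _ _ _ b2 le); lia.
- move=> i j j' le; rewrite !ffunE.
  have [a1 a2] := jx i j j' le; have [b1 b2] := jy i j j' le.
  split; first exact: op_mono.
  by have := op_shift _ _ _ _ _ (lip _ _ _ _ a2 le) (lip _ _ _ _ b2 le); lia.
Qed.

Lemma Qset_lattice : is_lattice (@dle n) (@Qset n).
Proof.
move=> x y Sx Sy; split.
- exists [ffun p => maxn (x p) (y p)]; split.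
  + by apply: Qset_pointwise => // *; lia.
  + by move=> i j; rewrite ffunE leq_maxl.
  + by move=> i j; rewrite ffunE leq_maxr.
  + by move=> w _ hx hy i j; rewrite ffunE geq_max hx hy.
- exists [ffun p => minn (x p) (y p)]; split.
  + by apply: Qset_pointwise => // *; lia.
  + by move=> i j; rewrite ffunE geq_minl.
  + by move=> i j; rewrite ffunE geq_minr.
  + by move=> w _ hx hy i j; rewrite ffunE leq_min hx hy.
Qed.

End QuasiCopulas.

Definition embed (b : nat) (t : nat -> nat -> nat) (i j : nat) : nat :=
  if (i < b) && (j < b) then t i j else minn i j.

Definition table (rows : seq (seq nat)) (i j : nat) : nat := nth 0 (nth [::] rows i) j.

Definition all_below (b : nat) (P : nat -> nat -> bool) : bool :=
  all (fun i => all (P i) (iota 0 b)) (iota 0 b).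

Lemma all_belowP b (P : nat -> nat -> bool) :
  all_below b P -> forall i j, i < b -> j < b -> P i j.
Proof.
move=> /allP rows i j lt_ib lt_jb.
have /rows/allP row_i : i \in iota 0 b by rewrite mem_iota.
by apply: row_i; rewrite mem_iota.
Qed.

Section Embedding.
Variables (b : nat) (t : nat -> nat -> nat).
Local Notation E := (embed b t).

Ltac embed_cases := rewrite /embed; repeat case: ifP => /=; move=> *; try lia.

(* Certificate for quasi-copulas: unit steps in both directions and zero
   borders, checked on [0,b]^2 (outside, the embedded map is min). *)
Definition unit_steps_ok : bool := all_below b.+1 (fun i j =>
  [&& (i < b) ==> (E i j <= E i.+1 j <= (E i j).+1),
      (j < b) ==> (E i j <= E i j.+1 <= (E i j).+1),
      E 0 j == 0 & E i 0 == 0]).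

Definition unit_squares_ok : bool := all_below b (fun i j =>
  E i j.+1 + E i.+1 j <= E i j + E i.+1 j.+1).

Lemma embed_last m x : b <= m -> x <= m -> E m x = x /\ E x m = x.
Proof. by split; embed_cases. Qed.

Lemma embed_square : unit_squares_ok ->
  forall i j, E i j.+1 + E i.+1 j <= E i j + E i.+1 j.+1.
Proof.
move=> squares i j; case: (ltnP i b) => lt_ib; last by embed_cases.
by case: (ltnP j b) => lt_jb; [exact: (all_belowP squares) | embed_cases].
Qed.

Hypothesis steps : unit_steps_ok.

Lemma embed_row_step i j : E i j <= E i.+1 j <= (E i j).+1.
Proof.
case: (ltnP i b) => lt_ib; last by apply/andP; embed_cases.
case: (leqP j b) => le_jb; last by apply/andP; embed_cases.
by have /and4P [/implyP/(_ lt_ib) ? _ _ _] := all_belowP steps (ltnW lt_ib) le_jb.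
Qed.

Lemma embed_col_step i j : E i j <= E i j.+1 <= (E i j).+1.
Proof.
case: (ltnP j b) => lt_jb; last by apply/andP; embed_cases.
case: (leqP i b) => le_ib; last by apply/andP; embed_cases.
by have /and4P [_ /implyP/(_ lt_jb) ? _ _] := all_belowP steps le_ib (ltnW lt_jb).
Qed.

Lemma embed_zero x : E 0 x = 0 /\ E x 0 = 0.
Proof.
case: (leqP x b) => le_xb; last by split; embed_cases.
have /and4P [_ _ /eqP -> _] := all_belowP steps (ltn0Sn b) le_xb.
by have /and4P [_ _ _ /eqP ->] := all_belowP steps le_xb (ltn0Sn b).
Qed.

Lemma embed_row_mono_lip i i' j : i <= i' -> E i j <= E i' j /\ E i' j + i <= E i j + i'.
Proof. exact: (unit_steps_mono_lip (f := E^~ j) (embed_row_step ^~ j)). Qed.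

Lemma embed_col_mono_lip i j j' : j <= j' -> E i j <= E i j' /\ E i j' + j <= E i j + j'.
Proof. exact: (unit_steps_mono_lip (f := E i) (embed_col_step i)). Qed.

End Embedding.

Definition patch (n b : nat) (t : nat -> nat -> nat) : dmap n :=
  [ffun p : 'I_n.+1 * 'I_n.+1 => embed b t p.1 p.2].

Section Patches.
Variable n : nat.

Lemma patch_boundary b t : b <= n -> unit_steps_ok b t -> boundary (patch n b t).
Proof.
move=> le_bn steps; split=> [i j | i]; rewrite !ffunE /=.
- have [le_ij _] := embed_row_mono_lip steps j (leq_ord i).
  have [last_j _] := embed_last t le_bn (leq_ord j).
  by rewrite last_j in le_ij; exact: leq_trans le_ij (leq_ord j).
- have [? ?] := embed_zero steps i; have [? ?] := embed_last t le_bn (leq_ord i).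
  by split.
Qed.

Lemma Qset_patch b t : b <= n -> unit_steps_ok b t -> Qset (patch n b t).
Proof.
move=> le_bn steps; have bP := patch_boundary le_bn steps.
split; last exact: boundary_irreducible.
apply/quasi_copula_mono_lip => //; split.
- by move=> i i' j le; rewrite !ffunE; apply: embed_row_mono_lip.
- by move=> i j j' le; rewrite !ffunE; apply: embed_col_mono_lip.
Qed.

Lemma Pset_patch b t :
  b <= n -> unit_steps_ok b t -> unit_squares_ok b t -> Pset (patch n b t).
Proof.
move=> le_bn steps squares; have bP := patch_boundary le_bn steps.
split; last exact: boundary_irreducible.
split=> // i i' j j' le_ii' le_jj'; rewrite !ffunE /=.
exact: (unit_squares_2increasing (embed_square squares) le_ii' le_jj').
Qed.

Lemma patch_not_copula b t i j : i < n -> j < n ->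
  embed b t i j + embed b t i.+1 j.+1 < embed b t i j.+1 + embed b t i.+1 j ->
  ~ Pset (patch n b t).
Proof.
move=> lt_in lt_jn violated [[_ increasing] _].
have := increasing (inord i) (inord i.+1) (inord j) (inord j.+1).
rewrite !ffunE /= !inordK ?ltnS ?(ltnW lt_in) ?(ltnW lt_jn) //.
by move=> /(_ (leqnSn _) (leqnSn _)); lia.
Qed.

Lemma patch_le b t1 t2 :
  all_below b (fun i j => t1 i j <= t2 i j) -> dle (patch n b t1) (patch n b t2).
Proof.
move=> le_t i j; rewrite !ffunE /embed /=.
by case: ifP => // /andP [lt_ib lt_jb]; exact: (all_belowP le_t).
Qed.

Lemma patch_squeeze b lo1 lo2 up1 up2 mid (z : dmap n) :
  all_below b (fun i j =>
    (mid i j <= maxn (lo1 i j) (lo2 i j)) && (minn (up1 i j) (up2 i j) <= mid i j)) ->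
  dle (patch n b lo1) z -> dle (patch n b lo2) z ->
  dle z (patch n b up1) -> dle z (patch n b up2) ->
  z = patch n b mid.
Proof.
move=> squeeze h1 h2 h3 h4; apply/ffunP => -[i j].
move: (h1 i j) (h2 i j) (h3 i j) (h4 i j); rewrite !ffunE /embed /=.
case: ifP => [/andP [lt_ib lt_jb] | _]; last lia.
by have /andP := all_belowP squeeze lt_ib lt_jb; lia.
Qed.

End Patches.

(* Two copulas S1, S2 on a 3 x 3 block, two common lower copulas
   L1, L2, and the table where max(L1, L2) = min(S1, S2), which violates the
   2-increasing inequality on the unit square [1,2] x [1,2]. *)
Definition copula_S1 := table [:: [:: 0; 0; 0]; [:: 0; 0; 1]; [:: 0; 1; 2]].
Definition copula_S2 := table [:: [:: 0; 0; 0]; [:: 0; 1; 1]; [:: 0; 1; 1]].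
Definition copula_L1 := table [:: [:: 0; 0; 0]; [:: 0; 0; 1]; [:: 0; 0; 1]].
Definition copula_L2 := table [:: [:: 0; 0; 0]; [:: 0; 0; 0]; [:: 0; 1; 1]].
Definition meet_S1_S2 := table [:: [:: 0; 0; 0]; [:: 0; 0; 1]; [:: 0; 1; 1]].

Lemma Pset_not_lattice n : 3 <= n -> ~ is_lattice (@dle n) (@Pset n).
Proof.
move=> le_3n lattice.
have S1 : Pset (patch n 3 copula_S1) by apply: Pset_patch.
have S2 : Pset (patch n 3 copula_S2) by apply: Pset_patch.
have L1 : Pset (patch n 3 copula_L1) by apply: Pset_patch.
have L2 : Pset (patch n 3 copula_L2) by apply: Pset_patch.
have [_ [z [Pz z_S1 z_S2 greatest]]] := lattice _ _ S1 S2.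
have L1_z : dle (patch n 3 copula_L1) z by apply: greatest => //; apply: patch_le.
have L2_z : dle (patch n 3 copula_L2) z by apply: greatest => //; apply: patch_le.
have ez : z = patch n 3 meet_S1_S2 by apply: patch_squeeze L1_z L2_z z_S1 z_S2.
by rewrite ez in Pz; apply: (patch_not_copula (i := 1) (j := 1)) Pz => //; lia.
Qed.

(* Two proper quasi-copulas X, Y on a 4 x 4 block, two proper
   quasi-copulas U1, U2 above both, and the table where max(X, Y) = min(U1, U2),
   which is a copula.  Each proper quasi-copula is witnessed by a violated
   unit square. *)
Definition quasi_X :=
  table [:: [:: 0; 0; 0; 0]; [:: 0; 0; 0; 1]; [:: 0; 0; 1; 1]; [:: 0; 1; 2; 2]].
Definition quasi_Y :=
  table [:: [:: 0; 0; 0; 0]; [:: 0; 0; 1; 1]; [:: 0; 0; 1; 1]; [:: 0; 1; 1; 2]].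
Definition quasi_U1 :=
  table [:: [:: 0; 0; 0; 0]; [:: 0; 0; 1; 1]; [:: 0; 0; 1; 2]; [:: 0; 1; 2; 2]].
Definition quasi_U2 :=
  table [:: [:: 0; 0; 0; 0]; [:: 0; 0; 1; 1]; [:: 0; 1; 1; 1]; [:: 0; 1; 2; 2]].
Definition join_X_Y :=
  table [:: [:: 0; 0; 0; 0]; [:: 0; 0; 1; 1]; [:: 0; 0; 1; 1]; [:: 0; 1; 2; 2]].

Lemma proper_quasi_patch n t i j : 4 <= n -> unit_steps_ok 4 t ->
  i < 3 -> j < 3 -> embed 4 t i j + embed 4 t i.+1 j.+1 < embed 4 t i j.+1 + embed 4 t i.+1 j ->
  Qset (patch n 4 t) /\ ~ Pset (patch n 4 t).
Proof.
move=> le_4n steps lt_i3 lt_j3 violated; split; first exact: Qset_patch.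
by apply: patch_not_copula violated; lia.
Qed.

Lemma QminusP_not_lattice n : 4 <= n ->
  ~ is_lattice (@dle n) (fun Q : dmap n => Qset Q /\ ~ Pset Q).
Proof.
move=> le_4n lattice.
have X := @proper_quasi_patch n quasi_X 1 2 le_4n isT isT isT isT.
have Y := @proper_quasi_patch n quasi_Y 2 1 le_4n isT isT isT isT.
have U1 := @proper_quasi_patch n quasi_U1 2 2 le_4n isT isT isT isT.
have U2 := @proper_quasi_patch n quasi_U2 1 1 le_4n isT isT isT isT.
have [[z [[_ not_Pz] X_z Y_z least]] _] := lattice _ _ X Y.
have z_U1 : dle z (patch n 4 quasi_U1) by apply: least => //; apply: patch_le.
have z_U2 : dle z (patch n 4 quasi_U2) by apply: least => //; apply: patch_le.
have ez : z = patch n 4 join_X_Y by apply: patch_squeeze X_z Y_z z_U1 z_U2.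
by apply: not_Pz; rewrite ez; apply: Pset_patch.
Qed.

Theorem theorem2 :
  (forall n : nat, 1 <= n -> is_lattice (@dle n) (@Qset n)) /\
  (forall n : nat, 3 <= n -> ~ is_lattice (@dle n) (@Pset n)) /\
  (forall n : nat, 4 <= n ->
     ~ is_lattice (@dle n) (fun Q : dmap n => Qset Q /\ ~ Pset Q)).
Proof.
split; first by move=> n _; exact: Qset_lattice.
by split; [exact: Pset_not_lattice | exact: QminusP_not_lattice].
Qed.
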